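(* Let $\mathbb{F}$ be a field of characteristic $2$ with at least $4$ elements, let $k\geq 2$ be an integer, and let $B\in M_{4k}(\mathbb{F})$ be a non-derogative matrix. Let $a\in\mathbb{F}$ with $a\neq 0,1$. (a) If $\operatorname{Trace}(B)=c\neq 0$, then there exist $N,D\in M_{4k}(\mathbb{F})$ with $B=N+D$, $N^2=0$, and $D$ diagonalizable with every eigenvalue in $\{0,\ c,\ ca,\ c(a+1)\}$. (b) If $\operatorname{Trace}(B)=0$, then there exist $N,D\in M_{4k}(\mathbb{F})$ with $B=N+D$, $N^2=0$, and $D$ diagonalizable with every eigenvalue in $\{0,1,a,a+1\}$.
   Context: A square matrix is non-derogative if its minimal polynomial equals its characteristic polynomial. A matrix $D\in M_n(\mathbb{F})$ is diagonalizable if there exists an invertible $U\in M_n(\mathbb{F})$ such that $U^{-1}DU$ is diagonal. *)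

From HB Require Import structures.
From mathcomp Require Import all_boot all_order all_algebra.
Set Implicit Arguments. Unset Strict Implicit. Unset Printing Implicit Defensive.
Import GRing.Theory.
Local Open Scope ring_scope.

(* A square matrix is non-derogative if its minimal polynomial equals its
   characteristic polynomial.  mathcomp's [mxminpoly] is only defined for
   matrices of size n.+1; the size-0 case is vacuous. *)
Definition non_derogative (F : fieldType) (n : nat) : 'M[F]_n -> Prop :=
  match n return 'M[F]_n -> Prop with
  | 0 => fun _ => True
  | n'.+1 => fun A => mxminpoly A = char_poly A
  end.

From HB Require Import structures.
From mathcomp Require Import all_boot all_order all_algebra.
From mathcomp Require Import zify ring.
From Stdlib Require Import Classical.
Set Implicit Arguments. Unset Strict Implicit. Unset Printing Implicit Defensive.
Import GRing.Theory.
Local Open Scope ring_scope.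

(* A non-derogative matrix B of size 2m has a cyclic vector v.  With
   Q = X (X - y), the vectors v Q^j and v Q^j B (j < m) then form a basis in
   which B = [[0, 1], [L, G]], where G agrees with y I outside its last row, so
   that tr B = (m - 1) y + G_mm.  Putting [[0, 0], [L', 0]] into the square-zero
   part leaves D = [[0, 1], [L - L', G]].  With L' = L, D is a root of
   X (X - y) (X - G_mm), which for y = c a and m even is
   X (X - c a) (X - c (a + 1)) in characteristic 2.  When tr B = 0, taking y = 1
   forces G_mm = 1, and taking L - L' = - a (a + 1) E_mm makes D a root of
   (X^2 - X) (X^2 - X + a (a + 1)) = X (X - 1) (X - a) (X - a - 1).  In both
   cases D is a root of a product of distinct linear factors, hence
   diagonalizable. *)

Section IrreducibleFactors.
Variable F : fieldType.
Implicit Types p q h pi mu nu : {poly F}.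

Lemma irredp_factor h : (1 < size h)%N -> exists2 pi, irreducible_poly pi & pi %| h.
Proof.
have [s] := ubnP (size h); elim: s h => // s IHs h /ltnSE sh_le h_gt1.
have [[q [sq_neq1 dvd_qh Nqh]] | irr_h] :=
  classic (exists q, [/\ size q != 1%N, q %| h & ~~ (q %= h)]); last first.
  exists h => //; split => // q sq_neq1 dvd_qh.
  by apply/negPn/negP => Nqh; apply: irr_h; exists q.
have h_neq0 : h != 0 by rewrite -size_poly_gt0 ltnW.
have q_neq0 : q != 0.
  by apply: contra_neq h_neq0 => q0; move: dvd_qh; rewrite q0 dvd0p => /eqP.
have sq_lt : (size q < size h)%N.
  by rewrite ltn_neqAle dvdp_leq // andbT dvdp_size_eqp.
have [|pi irr_pi dvd_piq] := IHs q (leq_trans sq_lt sh_le).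
  by move: sq_neq1 q_neq0; rewrite -size_poly_eq0; case: (size q) => [|[]].
by exists pi; rewrite // (dvdp_trans dvd_piq).
Qed.

Lemma dvdp_exp_max pi p : (1 < size pi)%N -> p != 0 ->
  exists a, pi ^+ a %| p /\ ~~ (pi ^+ a.+1 %| p).
Proof.
move=> spi p_neq0.
have a_lt_size a : pi ^+ a %| p -> (a < size p)%N.
  move/(dvdp_leq p_neq0); apply: leq_trans; have := size_exp pi a.
  have : pi ^+ a != 0 by rewrite expf_neq0 // -size_poly_gt0 ltnW.
  rewrite -size_poly_gt0; case: (size (pi ^+ a)) => // s _ /= ->.
  by rewrite ltnS leq_pmull // -subn1 subn_gt0.
have ex0 : exists a, pi ^+ a %| p by exists 0%N; rewrite expr0 dvd1p.
case: (ex_maxnP ex0 (fun a dvd_ap => ltnW (a_lt_size a dvd_ap))) => a dvd_ap a_max.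
by exists a; split => //; apply/negP => /a_max; rewrite ltnn.
Qed.

Lemma irredp_exp_gap mu nu : mu != 0 -> nu != 0 -> ~~ (nu %| mu) ->
  exists pi a, [/\ irreducible_poly pi, pi ^+ a %| mu, ~~ (pi ^+ a.+1 %| mu)
                 & pi ^+ a.+1 %| nu].
Proof.
move=> mu_neq0 nu_neq0 Nnu_mu.
set d := gcdp mu nu; set h := nu %/ d.
have nuE : nu = h * d by rewrite divpK ?dvdp_gcdr.
have [h_neq0 d_neq0] : h != 0 /\ d != 0.
  by apply/andP; rewrite -negb_or -mulf_eq0 -nuE.
have h_gt1 : (1 < size h)%N.
  rewrite ltnNge; apply: contra Nnu_mu => sh_le1.
  have sh1 : size h = 1%N.
    by move: h_neq0 sh_le1; rewrite -size_poly_eq0; case: size => [|[]].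
  have : d %= nu by rewrite -dvdp_size_eqp ?dvdp_gcdr // nuE size_mul // sh1.
  by move/eqp_dvdl <-; rewrite dvdp_gcdl.
have [pi irr_pi dvd_pih] := irredp_factor h_gt1.
have [a [dvd_amu Ndvd_amu]] := dvdp_exp_max irr_pi.1 mu_neq0.
have [c [dvd_cnu Ndvd_cnu]] := dvdp_exp_max irr_pi.1 nu_neq0.
exists pi, a; split => //; apply: (dvdp_trans _ dvd_cnu); rewrite dvdp_exp2l // ltnNge.
apply: contra Ndvd_cnu => c_le_a.
by rewrite exprS nuE dvdp_mul // dvdp_gcd dvd_cnu (dvdp_trans _ dvd_amu) ?dvdp_exp2l.
Qed.

End IrreducibleFactors.

Section LocalMinimalPolynomial.
Variables (F : fieldType) (n : nat) (A : 'M[F]_n.+1).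
Implicit Types (v w : 'rV[F]_n.+1) (g h mu nu : {poly F}).

Definition annihilates g v := v *m horner_mx A g = 0.

Definition local_minpoly v mu :=
  annihilates mu v /\ forall g, annihilates g v -> mu %| g.

Lemma annihilatesMr g h v : annihilates g v -> annihilates (g * h) v.
Proof. by rewrite /annihilates rmorphM /= -mulmxE mulmxA => ->; rewrite mul0mx. Qed.

Lemma annihilatesMl g h v : annihilates h v -> annihilates (g * h) v.
Proof. by rewrite mulrC; apply: annihilatesMr. Qed.

Lemma annihilatesB g h v :
  annihilates g v -> annihilates h v -> annihilates (g - h) v.
Proof. by rewrite /annihilates rmorphB /= mulmxBr => -> ->; rewrite subr0. Qed.

Lemma annihilatesDv g v w :
  annihilates g v -> annihilates g w -> annihilates g (v + w).
Proof. by rewrite /annihilates mulmxDl => -> ->; rewrite addr0. Qed.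

Lemma annihilatesBv g v w :
  annihilates g v -> annihilates g w -> annihilates g (v - w).
Proof. by rewrite /annihilates mulmxBl => -> ->; rewrite subr0. Qed.

Lemma annihilates_horner g h v :
  annihilates g (v *m horner_mx A h) <-> annihilates (h * g) v.
Proof. by rewrite /annihilates rmorphM /= -mulmxE mulmxA. Qed.

Lemma annihilates_mxminpoly v : annihilates (mxminpoly A) v.
Proof. by rewrite /annihilates mx_root_minpoly mulmx0. Qed.

Lemma local_minpoly_neq0 v mu : local_minpoly v mu -> mu != 0.
Proof.
case=> _ /(_ _ (annihilates_mxminpoly v)); apply: contraTneq => ->.
by rewrite dvd0p monic_neq0 ?mxminpoly_monic.
Qed.

Lemma local_minpoly_exists v : exists mu, local_minpoly v mu.
Proof.
have [s] := ubnP (size (mxminpoly A)).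
elim: s (mxminpoly A) (annihilates_mxminpoly v) (monic_neq0 (mxminpoly_monic A))
  => // s IHs g ann_g g_neq0 /ltnSE sg_le.
have [[h [ann_h Ndvd_gh]] | g_min] := classic (exists h, annihilates h v /\ ~~ (g %| h)).
  apply: (IHs (h %% g)) => //; last by rewrite (leq_trans _ sg_le) ?ltn_modp.
  have -> : h %% g = h - h %/ g * g by rewrite {2}(divp_eq h g) addrC addKr.
  exact/annihilatesB/annihilatesMl.
by exists g; split => // h ann_h; apply/negPn/negP => Ndvd; apply: g_min; exists h.
Qed.

Lemma local_minpoly_horner v h f :
  local_minpoly v (h * f) -> h != 0 -> local_minpoly (v *m horner_mx A h) f.
Proof.
move=> [ann_hf min_hf] h_neq0; split; first exact/annihilates_horner.
by move=> g /annihilates_horner /min_hf; rewrite dvdp_mul2l.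
Qed.

Lemma local_minpoly_add v w mu nu : local_minpoly v mu -> local_minpoly w nu ->
  coprimep mu nu -> local_minpoly (v + w) (mu * nu).
Proof.
move=> [ann_mu min_mu] [ann_nu min_nu] cop; split.
  exact/annihilatesDv/annihilatesMl/ann_nu/annihilatesMr.
have cop' : coprimep nu mu by rewrite coprimep_sym.
move=> g ann_g; rewrite Gauss_dvdp //; apply/andP; split.
  rewrite -(Gauss_dvdpr g cop); apply: min_mu.
  have -> : v = (v + w) - w by rewrite addrK.
  exact: annihilatesBv (annihilatesMl _ ann_g) (annihilatesMr _ ann_nu).
rewrite -(Gauss_dvdpr g cop'); apply: min_nu.
have -> : w = (v + w) - v by rewrite addrC addKr.
exact: annihilatesBv (annihilatesMl _ ann_g) (annihilatesMr _ ann_mu).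
Qed.

Lemma local_minpoly_grow v w mu nu : local_minpoly v mu -> local_minpoly w nu ->
  ~~ (nu %| mu) -> exists x xi, local_minpoly x xi /\ (size mu < size xi)%N.
Proof.
move=> lv lw Ndvd; have mu_neq0 := local_minpoly_neq0 lv.
have [pi [a [irr_pi dvd_amu Ndvd_amu dvd_anu]]] :=
  irredp_exp_gap mu_neq0 (local_minpoly_neq0 lw) Ndvd.
have pi_neq0 := irredp_neq0 irr_pi.
set mu' := mu %/ pi ^+ a; set nu' := nu %/ pi ^+ a.+1.
have muE : mu = pi ^+ a * mu' by rewrite mulrC divpK.
have nuE : nu = nu' * pi ^+ a.+1 by rewrite divpK.
have cop : coprimep mu' (pi ^+ a.+1).
  rewrite coprimep_sym coprimep_expl // irreducible_poly_coprime //.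
  by apply: contra Ndvd_amu => dvd_pimu'; rewrite exprS muE mulrC dvdp_mul2l ?expf_neq0.
(* The combined vector has local minimal polynomial mu' * pi ^+ a.+1 = mu * pi. *)
exists (v *m horner_mx A (pi ^+ a) + w *m horner_mx A nu'), (mu' * pi ^+ a.+1).
split.
  apply: local_minpoly_add cop.
    by apply: local_minpoly_horner; rewrite -?muE ?expf_neq0.
  apply: local_minpoly_horner; first by rewrite -nuE.
  by apply: contra_neq (local_minpoly_neq0 lw) => nu'0; rewrite nuE nu'0 mul0r.
rewrite exprSr mulrA [mu' * _]mulrC -muE size_mul //.
by move: irr_pi.1; move: (size mu) (size pi) => s t; lia.
Qed.

Lemma local_minpoly_dvd_all :
  exists v mu, local_minpoly v mu /\ forall w nu, local_minpoly w nu -> nu %| mu.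
Proof.
have l01 : local_minpoly 0 1 by split => [|g _]; rewrite ?/annihilates ?mul0mx ?dvd1p.
have [k] := ubnP (size (mxminpoly A) - size (1 : {poly F})).
elim: k 0 1 l01 => // k IHk v mu lv /ltnSE k_ge.
have [[w [nu [lw Ndvd]]] | all_dvd] :=
  classic (exists w nu, local_minpoly w nu /\ ~~ (nu %| mu)); last first.
  exists v, mu; split=> // w nu lw; apply/negPn/negP => Ndvd.
  by apply: all_dvd; exists w, nu.
have [x [xi [lx lt_mu_xi]]] := local_minpoly_grow lv lw Ndvd.
have le_xi : (size xi <= size (mxminpoly A))%N.
  exact: dvdp_leq (monic_neq0 (mxminpoly_monic A)) (lx.2 _ (annihilates_mxminpoly x)).
apply: (IHk x xi lx); apply: leq_trans k_ge.
exact: ltn_sub2l (leq_trans lt_mu_xi le_xi) lt_mu_xi.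
Qed.

Definition cyclic_vector v :=
  forall g, (size g <= n.+1)%N -> annihilates g v -> g = 0.

Lemma nonderogatory_cyclic_vector :
  mxminpoly A = char_poly A -> exists v, cyclic_vector v.
Proof.
move=> minE; have [v [mu [lv mu_max]]] := local_minpoly_dvd_all.
exists v => g sg ann_g; apply/eqP; apply: contraTT sg => g_neq0; rewrite -ltnNge.
have dvd_minpoly : mxminpoly A %| mu.
  apply: mxminpoly_min; apply/row_matrixP => i; rewrite row0 rowE.
  have [nu lnu] := local_minpoly_exists (delta_mx 0 i).
  by have /divpK <- := mu_max _ _ lnu; apply: annihilatesMl; case: lnu.
rewrite (leq_trans _ (dvdp_leq g_neq0 (lv.2 _ ann_g))) //.
by rewrite -[n.+2](size_char_poly A) -minE dvdp_leq // (local_minpoly_neq0 lv).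
Qed.

End LocalMinimalPolynomial.

Section QuadraticComposition.
Variables (F : fieldType) (q : {poly F}).
Implicit Types p r : {poly F}.
Hypothesis size_q : size q = 3%N.

Lemma size_comp_quadratic p : p != 0 -> size (p \Po q) = ((size p).-1 * 2).+1.
Proof.
by move=> p_neq0; rewrite polySpred ?comp_poly_eq0 ?size_q // size_comp_poly size_q.
Qed.

Lemma comp_quadratic_mulX_eq0 p r :
  p \Po q + (r \Po q) * 'X = 0 -> p = 0 /\ r = 0.
Proof.
move=> /eqP; rewrite addr_eq0 => /eqP E.
have r0 : r = 0.
  apply/eqP; apply: contraT => r_neq0.
  (* p \Po q has odd size, (r \Po q) * 'X has even size. *)
  have : size (p \Po q) = size (- ((r \Po q) * 'X)) by rewrite E.
  rewrite size_polyN size_mulX ?comp_poly_eq0 ?size_q // (size_comp_quadratic r_neq0).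
  have [-> | p_neq0] := eqVneq p 0; first by rewrite comp_poly0 size_poly0.
  rewrite size_comp_quadratic //; lia.
move: E; rewrite r0 comp_poly0 mul0r oppr0 => /eqP.
by rewrite comp_poly_eq0 ?size_q // => /eqP.
Qed.

Lemma size_comp_quadratic_mulX m p r : (size p <= m.+1)%N -> (size r <= m.+1)%N ->
  (size (p \Po q + (r \Po q) * 'X)%R <= m.+1 + m.+1)%N.
Proof.
have size_comp (s : {poly F}) : (size s <= m.+1)%N -> (size (s \Po q) <= (m * 2).+1)%N.
  move=> ss; rewrite (leq_trans (size_comp_poly_leq _ _)) // size_q ltnS leq_mul2r /=.
  by rewrite -subn1 leq_subLR add1n.
move=> /size_comp sp /size_comp sr.
rewrite (leq_trans (size_polyD _ _)) // geq_max.
have := size_polyMleq (r \Po q) 'X; rewrite size_polyX.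
by move: (size (p \Po q)) (size (r \Po q)) (size ((r \Po q) * 'X)) sp sr => a b c; lia.
Qed.

End QuadraticComposition.

Section ScalarOutsideLastRow.
Variables (F : fieldType) (m : nat) (G : 'M[F]_m.+1) (y : F).
Hypothesis G_rows : forall i, i != ord_max -> row i G = row i y%:M.

Local Notation E := (delta_mx ord_max ord_max : 'M[F]_m.+1).
Local Notation beta := (G ord_max ord_max).

Lemma entry_outside_last_row i j : i != ord_max -> G i j = y%:M i j.
Proof. by move=> /G_rows /rowP /(_ j); rewrite !mxE. Qed.

Lemma mxtrace_scalar_outside_last_row : \tr G = m%:R * y + beta.
Proof.
rewrite /mxtrace (bigD1 ord_max) //= addrC; congr (_ + _).
rewrite (eq_bigr (fun _ => y)) => [|i /entry_outside_last_row ->].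
  by rewrite sumr_const cardC1 card_ord mulr_natl.
by rewrite mxE eqxx mulr1n.
Qed.

Lemma delta_max_mul_sub_scalar : E *m (G - y%:M) = G - y%:M.
Proof.
apply/matrixP => i j; rewrite !mxE (bigD1 ord_max) //= big1 => [|k /negPf k_max].
  rewrite !mxE eqxx andbT addr0.
  have [-> | i_max] := eqVneq i ord_max; first by rewrite mul1r.
  by rewrite mul0r entry_outside_last_row // mxE subrr.
by rewrite !mxE k_max andbF mul0r.
Qed.

Lemma sub_scalar_mul_delta_max : (G - y%:M) *m E = (beta - y) *: E.
Proof.
apply/matrixP => i j; rewrite !mxE (bigD1 ord_max) //= big1 => [|k /negPf k_max].
  rewrite !mxE eqxx /= addr0.
  have [-> | i_max] := eqVneq i ord_max; first by rewrite mulr1n.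
  by rewrite entry_outside_last_row // mxE (negPf i_max) subrr mul0r mulr0.
by rewrite !mxE k_max mulr0.
Qed.

Lemma horner_mx_scalar_outside_last_row :
  horner_mx G (('X - y%:P) * ('X - beta%:P)) = 0.
Proof.
rewrite rmorphM /= !rmorphB /= horner_mx_X !horner_mx_C -mulmxE.
have -> : G - beta%:M = (G - y%:M) - (beta - y)%:M.
  by rewrite rmorphB opprB addrA subrK.
rewrite mulmxBr mul_mx_scalar -{2}delta_max_mul_sub_scalar mulmxA.
by rewrite sub_scalar_mul_delta_max -scalemxAl delta_max_mul_sub_scalar subrr.
Qed.

End ScalarOutsideLastRow.

Section BlockCompanion.
Variables (F : fieldType) (m : nat).
Local Notation M := ('M[F]_m.+1).

Lemma horner_mx_block_shift (G : M) (q : {poly F}) :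
  horner_mx (block_mx 0 1%:M 0 G : 'M_(m.+1 + m.+1)) ('X * q) =
  block_mx 0 (horner_mx G q) 0 (G *m horner_mx G q) :> 'M_(m.+1 + m.+1).
Proof.
elim/poly_ind: q => [|q c IHq]; first by rewrite mulr0 !rmorph0 mulmx0 block_mx0.
set D := block_mx 0 1%:M 0 G : 'M_(m.+1 + m.+1).
have -> : horner_mx D ('X * (q * 'X + c%:P)) =
    block_mx 0 (horner_mx G q) 0 (G *m horner_mx G q) *m D + c *: D.
  by rewrite mulrDr mulrA rmorphD rmorphM /= IHq rmorphM /= horner_mx_X horner_mx_C
    -!mulmxE mul_mx_scalar.
rewrite rmorphD rmorphM /= horner_mx_X horner_mx_C -mulmxE.
rewrite mulmx_block scale_block_mx add_block_mx !mulmx0 !mul0mx !scaler0 !addr0.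
by rewrite !add0r scalemx1 mulmxDr mulmxA mul_mx_scalar.
Qed.

Lemma horner_mx_block_idempotent (E X : M) (alpha : F) :
  E *m E = E -> E *m X = X -> X *m E = 0 ->
  horner_mx (block_mx 0 1%:M (- alpha *: E) (1%:M + X) : 'M_(m.+1 + m.+1))
    (('X * 'X - 'X) * ('X * 'X - 'X + alpha%:P)) = 0.
Proof.
move=> EE EX XE; set R := - alpha *: E.
set D := block_mx 0 1%:M R (1%:M + X) : 'M_(m.+1 + m.+1).
have XX : X *m X = 0 by rewrite -{2}EX mulmxA XE mul0mx.
have RR : R *m R = - alpha *: R by rewrite -scalemxAl -scalemxAr EE.
have RX : R *m X = - alpha *: X by rewrite -scalemxAl EX.
have XR : X *m R = 0 by rewrite -scalemxAr XE scaler0.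
have -> : horner_mx D (('X * 'X - 'X) * ('X * 'X - 'X + alpha%:P)) =
    (D *m D - D) *m (D *m D - D + alpha%:M).
  rewrite !rmorphM /= !rmorphD /= !rmorphN /= !rmorphM /=.
  by rewrite horner_mx_X horner_mx_C -!mulmxE.
have -> : D *m D - D = block_mx R X 0 (R + X).
  rewrite mulmx_block opp_block_mx add_block_mx !mulmx0 !mul0mx !mul1mx !mulmx1.
  rewrite mulmxDl mul1mx XR addr0 mulmxDr mulmx1 mulmxDl mul1mx XX addr0.
  rewrite !add0r subr0 subrr.
  by rewrite addrC addKr addrA addrAC addrK.
rewrite (scalar_mx_block m.+1 m.+1 alpha) add_block_mx mulmx_block.
rewrite !addr0 !mulmx0 !mul0mx !mulmxDr !mul_mx_scalar !mulmxDl RR RX XR XX.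
rewrite !add0r !addr0 scalerDr addrACA.
by rewrite -!scalerDl addNr !scale0r addr0 block_mx0.
Qed.

End BlockCompanion.

Lemma similar_nil_decomposition (F : fieldType) n (P B Np Dp : 'M[F]_n.+1) p :
  P \in unitmx -> P *m B *m invmx P = Np + Dp -> Np *m Np = 0 ->
  horner_mx Dp p = 0 ->
  exists N D, [/\ B = N + D, N *m N = 0 & horner_mx D p = 0].
Proof.
move=> P_unit BE NN Dp0; exists (invmx P *m Np *m P), (invmx P *m Dp *m P); split.
- by rewrite -mulmxDl -mulmxDr -BE !mulmxA mulVmx // mul1mx mulmxKV.
- by rewrite !mulmxA mulmxK // -(mulmxA (invmx P) Np Np) NN mulmx0 mul0mx.
- by rewrite horner_mx_uconjC // Dp0 mulmx0 mul0mx.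
Qed.

Section QuadraticKrylovBasis.
Variables (F : fieldType) (m' : nat).
Local Notation m := m'.+1.
Variables (B : 'M[F]_(m + m)) (v : 'rV[F]_(m + m)) (y : F).
Hypothesis v_cyclic : cyclic_vector B v.

Definition quad : {poly F} := 'X * ('X - y%:P).

Lemma size_quad : size quad = 3%N.
Proof. by rewrite size_mul ?polyX_eq0 ?polyXsubC_eq0 // size_polyX size_XsubC. Qed.

Definition quad_powers : 'M[F]_(m, m + m) :=
  \matrix_(j < m) (v *m horner_mx B (quad ^+ j)).

(* 'X^2 = quad + y 'X is what puts B in block form in this basis. *)
Definition quad_basis : 'M[F]_(m + m) := col_mx quad_powers (quad_powers *m B).

Lemma mul_quad_powers (c : 'rV[F]_m) :
  c *m quad_powers = v *m horner_mx B (rVpoly c \Po quad).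
Proof.
rewrite mulmx_sum_row {2}[c]row_sum_delta !linear_sum /=.
apply: eq_bigr => j _; rewrite rowK linearZ /= rVpoly_delta comp_polyZ.
have -> : 'X^j \Po quad = quad ^+ j by rewrite rmorphXn /= comp_polyX.
by rewrite !linearZ /= rmorphXn.
Qed.

Lemma quad_basis_unit : quad_basis \in unitmx.
Proof.
rewrite unitmxE unitfE; apply/negP => /det0P [x x_neq0].
rewrite -[x]hsubmxK mul_row_col mulmxA !mul_quad_powers -mulmxA.
have -> : forall p, horner_mx B p *m B = horner_mx B (p * 'X).
  by move=> p; rewrite rmorphM /= horner_mx_X.
rewrite -mulmxDr -rmorphD /= => /v_cyclic.
move/(_ (size_comp_quadratic_mulX size_quad (size_poly _ _) (size_poly _ _))).
have rVpoly_eq0 k (u : 'rV[F]_k) : rVpoly u = 0 -> u = 0.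
  by move=> u0; rewrite -[u]rVpolyK u0 linear0.
case/(comp_quadratic_mulX_eq0 size_quad) => /rVpoly_eq0 xl0 /rVpoly_eq0 xr0.
by move: x_neq0; rewrite -[x]hsubmxK xl0 xr0 row_mx0 eqxx.
Qed.

Definition quad_conj := quad_basis *m B *m invmx quad_basis.

Lemma mul_quad_basis_inv :
  quad_powers *m invmx quad_basis = row_mx 1%:M 0 /\
  quad_powers *m B *m invmx quad_basis = row_mx 0 1%:M.
Proof.
have := mulmxV quad_basis_unit.
by rewrite mul_col_mx (scalar_mx_block m m 1) /block_mx => /eq_col_mx.
Qed.

Lemma quad_conj_block :
  quad_conj = block_mx 0 1%:M (dlsubmx quad_conj) (drsubmx quad_conj).
Proof.
have top : usubmx quad_conj = row_mx 0 1%:M.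
  by rewrite /quad_conj /quad_basis !mul_col_mx col_mxKu (proj2 mul_quad_basis_inv).
by rewrite /block_mx -top /dlsubmx /drsubmx hsubmxK vsubmxK.
Qed.

Lemma row_quad_powers_mulB2 (i : 'I_m) : (i < m')%N ->
  row i (quad_powers *m B *m B) =
  row (inord i.+1) quad_powers + y *: row i (quad_powers *m B).
Proof.
move=> lt_im; rewrite !row_mul !rowK inordK ?ltnS // exprSr rmorphM /= -mulmxE.
have -> : horner_mx B quad = B *m (B - y%:M).
  by rewrite rmorphM /= rmorphB /= horner_mx_X horner_mx_C.
by rewrite mulmxBr mul_mx_scalar mulmxBr -scalemxAr mulmxBr -scalemxAr !mulmxA subrK.
Qed.

Lemma row_drsubmx_quad_conj (i : 'I_m) : i != ord_max ->
  row i (drsubmx quad_conj) = row i y%:M.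
Proof.
move=> i_max; have lt_im : (i < m')%N.
  rewrite ltn_neqAle -ltnS ltn_ord andbT; apply: contra i_max => /eqP i_m.
  exact/eqP/val_inj.
have : row i (dsubmx quad_conj) = row_mx (delta_mx 0 (inord i.+1)) (y *: delta_mx 0 i).
  rewrite /quad_conj /quad_basis !mul_col_mx col_mxKd row_mul.
  rewrite row_quad_powers_mulB2 // mulmxDl -scalemxAl -!row_mul.
  have [-> ->] := mul_quad_basis_inv.
  by rewrite !row_row_mx !row1 !row0 scale_row_mx scaler0 add_row_mx addr0 add0r.
rewrite -[dsubmx _]hsubmxK row_row_mx => /eq_row_mx [_ ->].
by rewrite -scalemx1 linearZ /= rowE mulmx1.
Qed.

Lemma mxtrace_quad_conj : \tr B = \tr (drsubmx quad_conj).
Proof.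
have -> : \tr B = \tr quad_conj.
  by rewrite /quad_conj mxtrace_mulC mulKmx // quad_basis_unit.
by rewrite {1}quad_conj_block mxtrace_block mxtrace0 add0r.
Qed.

Lemma quad_nil_decomposition :
  exists N D, [/\ B = N + D, N *m N = 0 &
    horner_mx D ('X * (('X - y%:P) * ('X - (\tr B - m'%:R * y)%:P))) = 0].
Proof.
set G := drsubmx quad_conj; have G_rows := row_drsubmx_quad_conj.
have betaE : G ord_max ord_max = \tr B - m'%:R * y.
  by rewrite mxtrace_quad_conj (mxtrace_scalar_outside_last_row G_rows) addrC addKr.
pose Np : 'M_(m + m) := block_mx 0 0 (dlsubmx quad_conj) 0.
pose Dp : 'M_(m + m) := block_mx 0 1%:M 0 G.
have BE : quad_conj = Np + Dp.
  by rewrite {1}quad_conj_block add_block_mx !addr0 !add0r.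
have NN : Np *m Np = 0 by rewrite mulmx_block !mulmx0 !mul0mx !addr0 block_mx0.
apply: similar_nil_decomposition quad_basis_unit BE NN _.
by rewrite horner_mx_block_shift -betaE (horner_mx_scalar_outside_last_row G_rows)
  mulmx0 block_mx0.
Qed.

Lemma quad_nil_decomposition_idempotent (alpha : F) : y = 1 -> \tr B = m%:R ->
  exists N D, [/\ B = N + D, N *m N = 0 &
    horner_mx D (('X * 'X - 'X) * ('X * 'X - 'X + alpha%:P)) = 0].
Proof.
move=> y1 trB; set G := drsubmx quad_conj.
pose E : 'M[F]_m := delta_mx ord_max ord_max.
have G_rows := row_drsubmx_quad_conj; rewrite y1 in G_rows.
have beta1 : G ord_max ord_max = 1.
  move: trB; rewrite mxtrace_quad_conj (mxtrace_scalar_outside_last_row G_rows).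
  by rewrite mulr1 mulrSr => /addrI.
have EX : E *m (G - 1%:M) = G - 1%:M := delta_max_mul_sub_scalar G_rows.
have XE : (G - 1%:M) *m E = 0.
  by rewrite (sub_scalar_mul_delta_max G_rows) beta1 subrr scale0r.
have EE : E *m E = E by rewrite mul_delta_mx.
pose Np : 'M_(m + m) := block_mx 0 0 (dlsubmx quad_conj + alpha *: E) 0.
pose Dp : 'M_(m + m) := block_mx 0 1%:M (- alpha *: E) (1%:M + (G - 1%:M)).
have BE : quad_conj = Np + Dp.
  rewrite {1}quad_conj_block add_block_mx !addr0 !add0r scaleNr addrK.
  by rewrite addrC subrK.
have NN : Np *m Np = 0 by rewrite mulmx_block !mulmx0 !mul0mx !addr0 block_mx0.
exact: similar_nil_decomposition quad_basis_unit BE NN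
  (horner_mx_block_idempotent alpha EE EX XE).
Qed.

End QuadraticKrylovBasis.

Lemma diagonalizable_horner_prod (F : fieldType) n (D : 'M[F]_n.+1) (rs : seq F) :
  uniq rs -> horner_mx D (\prod_(x <- rs) ('X - x%:P)) = 0 ->
  diagonalizable D /\ forall x, eigenvalue D x -> x \in rs.
Proof.
move=> rs_uniq /mxminpoly_min dvd_prod.
split=> [|x]; first by apply/diagonalizableP; exists rs.
by rewrite eigenvalue_root_min => /(root_dvdp dvd_prod); rewrite root_prod_XsubC.
Qed.

Section CharacteristicTwo.
Variables (F : fieldType) (a : F).
Hypotheses (F_char2 : 2 \in [pchar F]) (a_neq0 : a != 0) (a_neq1 : a != 1).

Lemma natr_pchar2 n : n%:R = (odd n)%:R :> F.
Proof.
by rewrite -{1}(odd_double_half n) natrD -addnn natrD (addrr_pchar2 F_char2) addr0.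
Qed.

Lemma uniq_four_roots : uniq [:: 0; 1; a; a + 1].
Proof.
have a1_neq0 : a + 1 != 0 by rewrite addr_eq0 (oppr_pchar2 F_char2).
have a1_neq1 : a + 1 != 1 by rewrite -subr_eq0 addrK.
have a_neq_a1 : a != a + 1.
  by rewrite -{1}[a]addr0 (inj_eq (addrI a)) eq_sym oner_neq0.
rewrite /= !inE !negb_or ![0 == _]eq_sym ![1 == _]eq_sym a_neq0 a1_neq0 a_neq1 a1_neq1.
by rewrite a_neq_a1 eq_sym oner_neq0.
Qed.

Lemma prod_four_roots : \prod_(x <- [:: 0; 1; a; a + 1]) ('X - x%:P) =
  ('X * 'X - 'X) * ('X * 'X - 'X + (a * (a + 1))%:P).
Proof.
have X2 : 2 \in [pchar {poly F}] by rewrite pchar_poly.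
rewrite !big_cons big_nil mulr1 subr0 mulrA mulrBr polyC1 mulr1; congr (_ * _).
rewrite polyCM polyCD polyC1; set c := a%:P.
rewrite [LHS](_ : _ = 'X * 'X - 'X + c * (c + 1) - (c * 'X) *+ 2); last by ring.
by rewrite mulrn_pchar // subr0.
Qed.

Variables (m' : nat) (B : 'M[F]_(m'.+1 + m'.+1)) (v : 'rV[F]_(m'.+1 + m'.+1)).
Hypotheses (m'_odd : odd m') (v_cyclic : cyclic_vector B v).

Lemma nil_diag_decomposition_trace c : \tr B = c -> c != 0 ->
  exists N D, [/\ B = N + D, N *m N = 0, diagonalizable D &
    forall x, eigenvalue D x -> x \in [:: 0; c; c * a; c * (a + 1)]].
Proof.
move=> trB c_neq0.
have [N [D [BND NN hD]]] := quad_nil_decomposition (c * a) v_cyclic.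
have betaE : \tr B - m'%:R * (c * a) = c * (a + 1).
  by rewrite trB natr_pchar2 m'_odd mul1r (oppr_pchar2 F_char2) addrC mulrDr mulr1.
have roots_uniq : uniq [:: 0; c * a; c * (a + 1)].
  rewrite -[0](mulr0 c) (map_inj_uniq (mulfI c_neq0) [:: 0; a; a + 1]).
  apply: subseq_uniq uniq_four_roots.
  by rewrite -[[:: 0; a; a + 1]]/([:: 0] ++ _) subseq_cat2l subseq_cons.
have [|D_diag D_eig] := diagonalizable_horner_prod roots_uniq (D := D).
  by rewrite !big_cons big_nil mulr1 subr0 -betaE.
exists N, D; split => // x /D_eig; apply: mem_subseq.
by rewrite -[[:: 0; _; _]]/([:: 0] ++ _) subseq_cat2l subseq_cons.
Qed.

Lemma nil_diag_decomposition_trace0 : \tr B = 0 ->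
  exists N D, [/\ B = N + D, N *m N = 0, diagonalizable D &
    forall x, eigenvalue D x -> x \in [:: 0; 1; a; a + 1]].
Proof.
move=> trB; have [|N [D [BND NN hD]]] :=
  quad_nil_decomposition_idempotent v_cyclic (a * (a + 1)) (erefl 1).
  by rewrite trB natr_pchar2 /= m'_odd.
rewrite -prod_four_roots in hD.
have [D_diag D_eig] := diagonalizable_horner_prod uniq_four_roots hD.
by exists N, D.
Qed.

End CharacteristicTwo.

Theorem proposition2p7 (F : fieldType) (k : nat) (B : 'M[F]_(4 * k)) (a : F) :
  2%N \in [pchar F] ->
  (exists s : seq F, uniq s /\ size s = 4%N) ->
  (2 <= k)%N ->
  non_derogative B ->
  a != 0 -> a != 1 ->
  (forall c : F, \tr B = c -> c != 0 ->
     exists N D : 'M[F]_(4 * k),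
       [/\ B = N + D, N *m N = 0, diagonalizable D &
           forall x, eigenvalue D x -> x \in [:: 0; c; c * a; c * (a + 1)]]) /\
  (\tr B = 0 ->
     exists N D : 'M[F]_(4 * k),
       [/\ B = N + D, N *m N = 0, diagonalizable D &
           forall x, eigenvalue D x -> x \in [:: 0; 1; a; a + 1]]).
Proof.
(* The field-size hypothesis is implied by 0, 1, a, a + 1 being distinct, and
   k >= 2 is only used to exclude the empty matrix. *)
move=> F_char2 _ k_ge2 nd a_neq0 a_neq1.
case: k B nd k_ge2 => [|j] // B nd _.
have sizeE : (4 * j.+1 = j.*2.+2 + j.*2.+2)%N by rewrite -!addnn; lia.
move: B nd; rewrite sizeE => B nd.
have [v v_cyclic] := nonderogatory_cyclic_vector (nd : mxminpoly B = char_poly B).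
have m'_odd : odd j.*2.+1 by rewrite /= odd_double.
split=> [c|].
  exact: (nil_diag_decomposition_trace (m' := j.*2.+1) F_char2 a_neq0 a_neq1
            m'_odd v_cyclic).
exact: (nil_diag_decomposition_trace0 (m' := j.*2.+1) F_char2 a_neq0 a_neq1
          m'_odd v_cyclic).
Qed.
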